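(* For $n\ge1$ let $\mathcal{A}_n(\lambda)=\det(\lambda I_n-N_n)$, where $N_n$ is the $n\times n$ matrix with $(N_n)_{j,i}=1$ if $i\ge j-1$ and $0$ otherwise, and set $\mathcal{A}_0(\lambda)=1$. Then $\mathcal{A}_1(\lambda)=\lambda-1$ and $$\mathcal{A}_n(\lambda)=\lambda\,\mathcal{A}_{n-1}(\lambda)-\lambda\,\mathcal{A}_{n-2}(\lambda)\qquad(n\ge2).$$ *)

From mathcomp Require Import all_boot all_algebra.
Set Implicit Arguments. Unset Strict Implicit. Unset Printing Implicit Defensive.
Import GRing.Theory.
Local Open Scope ring_scope.

(* N_n : n x n matrix with (N_n)_{j,i} = 1 if i >= j - 1 (i.e. j <= i + 1), else 0.
   Row index j, column index i (0-based; the condition is shift-invariant). *)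
Definition Nmx (R : nzRingType) (n : nat) : 'M[R]_n :=
  \matrix_(j < n, i < n) (if (j <= i.+1)%N then 1 else 0).

(* A_n(lambda) = det(lambda I_n - N_n) = char_poly N_n for n >= 1, A_0 = 1.
   Note char_poly of a 0x0 matrix is already 1. *)
Definition Apoly (R : comNzRingType) (n : nat) : {poly R} :=
  if n is 0 then 1 else char_poly (Nmx R n).

(** Rows 0 and 1 of [N_n] both consist of ones, so subtracting row 1 from
    row 0 of [X - N_n] leaves [X, -X, 0, ..., 0] as first row.  Expanding
    along it, the (0,0) minor is [X - N_(n-1)] because [N] is Toeplitz, and
    the (0,1) minor has first column [(-1, 0, ..., 0)], which reduces it to
    [X - N_(n-2)]. *)

From mathcomp Require Import all_boot all_algebra.
Set Implicit Arguments. Unset Strict Implicit. Unset Printing Implicit Defensive.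
Import GRing.Theory.
Local Open Scope ring_scope.

Lemma det_subr_row (R : comNzRingType) n (A B : 'M[R]_n) (i k : 'I_n) :
  i != k -> row i B = row i A - row k A -> row' i B = row' i A ->
  \det B = \det A.
Proof.
move=> neq_ik rowB rowB'.
pose C := \matrix_(r, c) (if r == i then A k c else A r c).
have rowC' : row' i C = row' i A.
  by apply/matrixP => r c; rewrite !mxE eq_sym (negbTE (neq_lift i r)).
have detC : \det C = 0.
  apply: (determinant_alternate neq_ik) => c.
  by rewrite !mxE eqxx eq_sym (negbTE neq_ik).
rewrite (@determinant_multilinear _ _ _ A C i 1 (-1)) ?detC ?mulr0 ?addr0 ?mul1r //.
rewrite rowB scale1r scaleN1r; congr (_ - _).
by apply/rowP => c; rewrite !mxE eqxx.
by rewrite rowC' rowB'.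
Qed.

Section CharPolyNmx.
Variable R : comNzRingType.

Local Notation XN n := (char_poly_mx (Nmx R n)).

Lemma char_poly_mx_NmxE n (i j : 'I_n) :
  XN n i j = 'X *+ (i == j) - ((i <= j.+1)%N)%:R.
Proof.
rewrite /char_poly_mx /Nmx !mxE; congr (_ - _).
by case: ifP; rewrite ?polyC1 ?polyC0.
Qed.

Lemma Nmx_row'_col'0 n : row' 0 (col' 0 (Nmx R n.+1)) = Nmx R n.
Proof. by apply/matrixP => i j; rewrite !mxE. Qed.

Lemma cofactor_char_Nmx00 n : cofactor (XN n.+1) 0 0 = char_poly (Nmx R n).
Proof.
by rewrite /cofactor row'_col'_char_poly_mx Nmx_row'_col'0 expr0 mul1r.
Qed.

Lemma cofactor_char_Nmx01 n : cofactor (XN n.+2) 0 1 = char_poly (Nmx R n).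
Proof.
set B := row' 0 (col' 1 (XN n.+2)).
have B_col0 i : B i 0 = - (i == 0)%:R.
  by rewrite 2!mxE char_poly_mx_NmxE; case: i => [[|i] ?]; rewrite /= mulr0n sub0r.
have B_minor : row' 0 (col' 0 B) = XN n.
  by apply/matrixP => i j; rewrite 4!mxE !char_poly_mx_NmxE.
rewrite /cofactor (expand_det_col _ 0) big_ord_recl big1 => [|i _]; last first.
  by rewrite B_col0 oppr0 mul0r.
by rewrite B_col0 /cofactor B_minor expr0 expr1 addr0 !mulN1r mul1r opprK.
Qed.

Lemma char_poly_Nmx_rec n :
  char_poly (Nmx R n.+2) =
  'X * char_poly (Nmx R n.+1) - 'X * char_poly (Nmx R n).
Proof.
pose B := \matrix_(r, c) (XN n.+2 r c - (r == 0)%:R * XN n.+2 1 c).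
have B_lift r c : B (lift 0 r) c = XN n.+2 (lift 0 r) c.
  by rewrite mxE mul0r subr0.
have B_row0 c : B 0 c = 'X *+ (0 == c) - 'X *+ (1 == c).
  by rewrite mxE !char_poly_mx_NmxE mul1r opprB addrA subrK.
have detB : \det B = char_poly (Nmx R n.+2).
  apply: (@det_subr_row _ _ _ _ 0 1) => //.
  - by apply/rowP => c; rewrite !mxE mul1r.
  - by apply/matrixP => r c; rewrite [LHS]mxE B_lift [RHS]mxE.
have cofB c : cofactor B 0 c = cofactor (XN n.+2) 0 c.
  by congr (_ * \det _); apply/matrixP => r s; rewrite 2!mxE B_lift !mxE.
rewrite -detB (expand_det_row _ 0) !big_ord_recl big1 => [|c _]; last first.
  by rewrite B_row0 subrr mul0r.
have -> : lift 0 0 = 1 :> 'I_n.+2 by apply: val_inj.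
rewrite !B_row0 !cofB cofactor_char_Nmx00 cofactor_char_Nmx01 /=.
by rewrite mulr1n mulr0n subr0 sub0r addr0 mulNr.
Qed.

End CharPolyNmx.

Theorem lemma3 (R : comNzRingType) :
  Apoly R 1 = 'X - 1 /\
  (forall n : nat, (2 <= n)%N ->
     Apoly R n = 'X * Apoly R n.-1 - 'X * Apoly R n.-2).
Proof.
split; first by rewrite /= /char_poly det_mx11 char_poly_mx_NmxE.
case=> [|[|[|n]]] // _; first by rewrite /= char_poly_Nmx_rec /char_poly det_mx00.
exact: char_poly_Nmx_rec.
Qed.
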